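(* Consider the lattice Boltzmann scheme described in the context, viewed formally as depending on the single parameter $\Delta t\to0$ (with $\lambda$, $e_j$, $M$, $G$, $s_k$ fixed). Define the conservation defect $$\theta^k=\partial_t m^k_{\rm eq}+\sum_{\beta=1}^d\sum_{j=0}^J M^k_j v_j^\beta\,\partial_\beta f^j_{\rm eq}=\sum_{j=0}^J M^k_j\Big(\partial_t f^j_{\rm eq}+\sum_{\beta=1}^d v_j^\beta\partial_\beta f^j_{\rm eq}\Big),\quad 0\le k\le J.$$ Then for $d+1\le k\le J$, $$m^k=m^k_{\rm eq}-\frac{\Delta t}{s_k}\theta^k+O(\Delta t^2),\qquad m^k_*=m^k_{\rm eq}-\Big(\frac1{s_k}-1\Big)\Delta t\,\theta^k+O(\Delta t^2),$$ and for $0\le j\le J$, $1\le\beta\le d$, $$\partial_\beta f^j_*=\partial_\beta f^j_{\rm eq}-\Delta t\sum_{k=d+1}^J\Big(\frac1{s_k}-1\Big)(M^{-1})^j_k\,\partial_\beta\theta^k+O(\Delta t^2).$$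
   Context: Let $d\ge1$ be the space dimension, $J\ge d$ an integer, and $e_0,\dots,e_J\in\mathbb{R}^d$ fixed vectors. Let $\Delta x>0$, $\Delta t>0$ with $\lambda=\Delta x/\Delta t$ fixed, and set $v_j=\lambda e_j$, with components $v_j^\alpha$. Let $M=(M^k_j)_{0\le k,j\le J}$ be a fixed invertible real matrix with $M^0_j=1$ and $M^\alpha_j=v_j^\alpha$ for $1\le\alpha\le d$; $(M^{-1})^j_k$ denotes the entries of its inverse. Let $G:\mathbb{R}^{d+1}\to\mathbb{R}^{J+1}$ be a fixed smooth map with $\sum_j G^j(W)=W^0$ and $\sum_j v_j^\alpha G^j(W)=W^\alpha$. Let $s_k\in(0,2]$, $d+1\le k\le J$, be fixed. The scheme: densities $f^j(x,t)$; moments $m^k=\sum_j M^k_j f^j$; $\rho=m^0$, $q^\alpha=m^\alpha$, $W=(\rho,q^1,\dots,q^d)$; $f^j_{\rm eq}=G^j(W)$, $m^k_{\rm eq}=\sum_j M^k_j f^j_{\rm eq}$. Collision: $m^i_*=m^i$ for $0\le i\le d$, $m^k_*=(1-s_k)m^k+s_k m^k_{\rm eq}$ for $k\ge d+1$; $f^j_*=\sum_k (M^{-1})^j_k m^k_*$. Advection: $f^j(x,t+\Delta t)=f^j_*(x-v_j\Delta t,t)$. Here $\partial_\beta=\partial/\partial x_\beta$. Formal framework: all quantities are smooth functions of $(x,t)$ satisfying these relations identically and are expanded by Taylor's formula in $\Delta t$; $O(\Delta t^n)$ denotes a remainder of order $\Delta t^n$ as $\Delta t\to0$, derivatives of remainders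 being of the same order. *)

From HB Require Import structures.
From mathcomp Require Import all_boot all_order all_algebra.
From mathcomp Require Import all_classical all_reals all_analysis.
Set Implicit Arguments. Unset Strict Implicit. Unset Printing Implicit Defensive.
Import Order.TTheory GRing.Theory Num.Theory numFieldNormedType.Exports.
Local Open Scope ring_scope.

Section LBM.
Context {R : realType}.

Definition Dseq {V : normedModType R} (l : seq V) (F : V -> R) : V -> R :=
  foldr (fun u g => 'D_u g) F l.

Definition smooth {V : normedModType R} (F : V -> R) : Prop :=
  forall (l : seq V) (p : V), differentiable (Dseq l F) p.

Context (d J : nat).

Definition ST := ('rV[R]_d * R)%type.

Definition dT (F : ST -> R) (p : ST) : R := 'D_((0 : 'rV[R]_d), (1 : R)) F p.
Definition dX (b : 'I_d) (F : ST -> R) (p : ST) : R :=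
  'D_((delta_mx 0 b : 'rV[R]_d), (0 : R)) F p.

(* r = O(dt^n) as dt -> 0+, uniformly in (x,t), together with all its
   derivatives (of every order) *)
Definition LBMO (n : nat) (r : R -> ST -> R) : Prop :=
  forall l : seq ST, exists C : R, exists delta : R, 0 < delta /\
    forall dt : R, 0 < dt -> dt < delta ->
      forall p : ST, `|Dseq l (r dt) p| <= C * dt ^+ n.

Context (lam : R) (e : 'I_J.+1 -> 'rV[R]_d) (M : 'M[R]_J.+1)
        (G : 'rV[R]_d.+1 -> 'I_J.+1 -> R) (s : 'I_J.+1 -> R).

Definition vel (j : 'I_J.+1) : 'rV[R]_d := lam *: e j.

Section Fields.
Variable f : 'I_J.+1 -> ST -> R.

Definition mom (k : 'I_J.+1) (p : ST) : R := \sum_(j < J.+1) M k j * f j p.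
Definition Wof (p : ST) : 'rV[R]_d.+1 := \row_(i < d.+1) mom (inord i) p.
Definition feq (j : 'I_J.+1) (p : ST) : R := G (Wof p) j.
Definition meq (k : 'I_J.+1) (p : ST) : R := \sum_(j < J.+1) M k j * feq j p.
Definition mstar (k : 'I_J.+1) (p : ST) : R :=
  if (k <= d)%N then mom k p else (1 - s k) * mom k p + s k * meq k p.
Definition fstar (j : 'I_J.+1) (p : ST) : R :=
  \sum_(k < J.+1) invmx M j k * mstar k p.
Definition theta (k : 'I_J.+1) (p : ST) : R :=
  \sum_(j < J.+1) M k j *
     (dT (feq j) p + \sum_(b < d) (vel j) 0 b * dX b (feq j) p).
End Fields.

Definition scheme (dt : R) (f : 'I_J.+1 -> ST -> R) : Prop :=
  forall (j : 'I_J.+1) (x : 'rV[R]_d) (t : R),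
    f j (x, t + dt) = fstar f j (x - dt *: vel j, t).

End LBM.

(* Read backwards, the scheme gives exact identities: advection is the translation by
   dt (v_j, 1), so m^k_* - m^k = sum_j M^k_j (f^j(. + dt (v_j, 1)) - f^j), and for k > d
   the relaxation step gives m^k_eq - m^k = (m^k_* - m^k) / s_k, while m^k_eq = m^k for
   k <= d by conservation.  Hence f^j_eq = f^j + O(dt), where O(dt^n) means bounded by
   C dt^n with all derivatives, uniformly in (x, t).  The derivative along (v_j, 1) is
   the transport operator in theta^k, so a second-order Taylor expansion of the
   translates gives the first two expansions; the third is the x_beta-derivative of
   sum_(k > d) (M^-1)^j_k times the second. *)
From HB Require Import structures.
From mathcomp Require Import all_boot all_order all_algebra.
From mathcomp Require Import all_classical all_reals all_analysis.
From mathcomp Require Import ring.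
Import Order.TTheory GRing.Theory Num.Theory numFieldNormedType.Exports.
Local Open Scope classical_set_scope.
Local Open Scope ring_scope.

Set Implicit Arguments. Unset Strict Implicit. Unset Printing Implicit Defensive.

Section IteratedDerivatives.
Context {R : realType} {V : normedModType R}.
Implicit Types (F H : V -> R) (u p : V) (l : seq V).

Lemma Dseq_cat l1 l2 F : Dseq (l1 ++ l2) F = Dseq l1 (Dseq l2 F).
Proof. exact: foldr_cat. Qed.

Lemma Dseq_rcons l u F : Dseq (rcons l u) F = Dseq l ('D_u F).
Proof. by rewrite -cats1 Dseq_cat. Qed.

Lemma smooth_Dseq l F : smooth F -> smooth (Dseq l F).
Proof. by move=> sF l' p; rewrite -Dseq_cat. Qed.

Lemma smooth_derive u F : smooth F -> smooth ('D_u F).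
Proof. by move=> sF; apply: (smooth_Dseq [:: u] sF). Qed.

Lemma smooth_derivable F p u : smooth F -> derivable F p u.
Proof. by move=> sF; apply/diff_derivable/(sF [::]). Qed.

Lemma Dseq_cst l (c : R) : Dseq l (fun=> c) = fun=> if l is [::] then c else 0.
Proof.
elim: l => //= u l ->; apply/funext => p.
exact: (derive_cst (if l is [::] then c else 0)).
Qed.

Lemma smooth_cst (c : R) : smooth (fun _ : V => c).
Proof. by move=> l p; rewrite Dseq_cst; apply: differentiable_cst. Qed.

Lemma DseqD l F H : smooth F -> smooth H ->
  Dseq l (fun p => F p + H p) = fun p => Dseq l F p + Dseq l H p.
Proof.
move=> sF sH; elim: l => //= u l ->; apply/funext => p.
by apply: (deriveD (f := Dseq l F)); apply: smooth_derivable; apply: smooth_Dseq.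
Qed.

Lemma DseqZ l c F : smooth F -> Dseq l (fun p => c * F p) = fun p => c * Dseq l F p.
Proof.
move=> sF; elim: l => //= u l ->; apply/funext => p.
by apply: (deriveZ (f := Dseq l F)); apply: smooth_derivable; apply: smooth_Dseq.
Qed.

Lemma Dseq_sum (I : Type) (r : seq I) (P : pred I) (Fs : I -> V -> R) l :
  (forall i, smooth (Fs i)) ->
  Dseq l (fun p => \sum_(i <- r | P i) Fs i p) =
  fun p => \sum_(i <- r | P i) Dseq l (Fs i) p.
Proof.
move=> sFs; elim: l => //= u l ->; apply/funext => p; rewrite -fct_sumE.
apply: derive_val; elim/big_ind2: _ => [|? ? ? ?|i _]; first exact: is_derive_cst.
  exact: is_deriveD.
by apply/derivableP/smooth_derivable/smooth_Dseq.
Qed.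

Lemma smoothD F H : smooth F -> smooth H -> smooth (fun p => F p + H p).
Proof.
move=> sF sH l p; rewrite DseqD //.
exact: (differentiableD (f := Dseq l F)).
Qed.

Lemma smoothZ c F : smooth F -> smooth (fun p => c * F p).
Proof. by move=> sF l p; rewrite DseqZ //; apply: (differentiableZ (f := Dseq l F)). Qed.

Lemma smooth_sum (I : Type) (r : seq I) (P : pred I) (Fs : I -> V -> R) :
  (forall i, smooth (Fs i)) -> smooth (fun p => \sum_(i <- r | P i) Fs i p).
Proof.
move=> sFs l p; rewrite Dseq_sum // -fct_sumE.
elim/big_ind: _ => [|? ? ? ?|i _]; [exact: differentiable_cst|exact: differentiableD|].
exact: sFs.
Qed.

Lemma smoothN F : smooth F -> smooth (fun p => - F p).
Proof.
move=> /(smoothZ (-1)); congr smooth; apply/funext => p; exact: mulN1r.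
Qed.

Lemma DseqB l F H : smooth F -> smooth H ->
  Dseq l (fun p => F p - H p) = fun p => Dseq l F p - Dseq l H p.
Proof.
move=> sF sH; have -> : (fun p => F p - H p) = fun p => F p + (-1) * H p.
  by apply/funext => p; rewrite mulN1r.
rewrite DseqD ?DseqZ //; last exact: smoothZ.
by apply/funext => p; rewrite mulN1r.
Qed.

Lemma smoothB F H : smooth F -> smooth H -> smooth (fun p => F p - H p).
Proof. by move=> sF sH; apply/smoothD/smoothN. Qed.

Lemma derive_translate u a F :
  'D_u (fun p => F (p + a)) = fun p => 'D_u F (p + a).
Proof.
apply/funext => p; rewrite /derive /=; do 2 f_equal.
by apply/funext => h /=; rewrite addrA.
Qed.

Lemma Dseq_translate l a F : Dseq l (fun p => F (p + a)) = fun p => Dseq l F (p + a).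
Proof. by elim: l => //= u l ->; rewrite derive_translate. Qed.

Lemma smooth_translate a F : smooth F -> smooth (fun p => F (p + a)).
Proof.
move=> sF l p; rewrite Dseq_translate.
have shift_diff : differentiable (fun q : V => q + a) p.
  exact: (differentiableD (f := id)).
exact: (differentiable_comp shift_diff).
Qed.

End IteratedDerivatives.

Lemma MVT_affine_le {R : realType} (phi dphi : R -> R) (t c K : R) : 0 <= t ->
  (forall x, 0 <= x <= t -> is_derive x 1 phi (dphi x)) ->
  (forall x, 0 <= x <= t -> `|dphi x - c| <= K) ->
  `|phi t - phi 0 - c * t| <= K * t.
Proof.
rewrite le_eqVlt => /predU1P [<- _ _|t_gt0 dphiE dphi_near].
  by rewrite subrr mulr0 sub0r normrN normr0 mulr0.
pose psi x := phi x - c * x.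
have psi' x : 0 <= x <= t -> is_derive x 1 psi (dphi x - c).
  move=> /dphiE phi'; rewrite -[X in _ - X]mulr1.
  exact: (is_deriveB _ (is_deriveZ c (is_derive_id x 1))).
have in_cc x : x \in `]0, t[ -> 0 <= x <= t.
  by rewrite in_itv /= => /andP [x0 xt]; rewrite !ltW.
have psi_cont : {within `[0, t], continuous psi}.
  apply: derivable_within_continuous => x.
  by rewrite in_itv /= => /psi' [].
have [x x0t psiE] := MVT t_gt0 (fun x x0t => psi' x (in_cc x x0t)) psi_cont.
have -> : phi t - phi 0 - c * t = psi t - psi 0 by rewrite /psi; ring.
rewrite psiE subr0 normrM (gtr0_norm t_gt0).
by apply: ler_wpM2r; [exact: ltW|exact: dphi_near (in_cc _ x0t)].
Qed.

Section AlongLines.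
Context {R : realType} {V : normedModType R}.
Implicit Types (F : V -> R) (u w p q : V).

Lemma is_derive_along F q u x : derivable F (q + x *: u) u ->
  is_derive x 1 (fun y : R => F (q + y *: u)) ('D_u F (q + x *: u)).
Proof.
move=> dF.
have quotE : (fun h : R => h^-1 *: ((fun y => F (q + y *: u)) (h *: 1 + x)
                                      - F (q + x *: u)))
           = (fun h : R => h^-1 *: (F (h *: u + (q + x *: u)) - F (q + x *: u))).
  apply/funext => h /=; congr (_ *: (F _ - _)).
  by rewrite -[h *: 1]/(h * 1) mulr1 scalerDl addrCA addrC.
by apply: DeriveDef; rewrite /derivable /derive /= quotE.
Qed.

Lemma increment_le F u p t C : smooth F -> 0 <= t -> (forall q, `|'D_u F q| <= C) ->
  `|F (p + t *: u) - F p| <= C * t.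
Proof.
move=> sF t0 DF_le.
have := @MVT_affine_le _ (fun y => F (p + y *: u)) (fun y => 'D_u F (p + y *: u)) t 0 C t0.
rewrite /= scale0r addr0 mul0r subr0; apply => x _; last by rewrite subr0.
exact/is_derive_along/smooth_derivable.
Qed.

Lemma taylor2_le F u p t C : smooth F -> 0 <= t ->
  (forall q, `|'D_u ('D_u F) q| <= C) ->
  `|F (p + t *: u) - F p - t * 'D_u F p| <= C * t ^+ 2.
Proof.
move=> sF t0 D2F_le; rewrite expr2 mulrA.
have := @MVT_affine_le _ (fun y => F (p + y *: u)) (fun y => 'D_u F (p + y *: u))
  t ('D_u F p) (C * t) t0.
rewrite /= scale0r addr0 (mulrC ('D_u F p)); apply => x.
  by move=> _; apply/is_derive_along/smooth_derivable.
move=> /andP [x0 xt]; apply: le_trans (increment_le p (smooth_derive u sF) x0 D2F_le) _.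
by rewrite ler_wpM2l // (le_trans _ (D2F_le p)).
Qed.

Lemma second_difference_le F u w p t B eps : smooth F -> 0 <= t ->
  (forall a b, 0 <= a <= t -> 0 <= b <= t ->
     `|'D_w ('D_u F) (p + a *: u + b *: w) - B| <= eps) ->
  `|F (p + t *: u + t *: w) - F (p + t *: u) - F (p + t *: w) + F p - B * t ^+ 2|
    <= eps * t ^+ 2.
Proof.
move=> sF t0 D2F_near.
have DuF_incr a : 0 <= a <= t ->
    `|'D_u F (p + a *: u + t *: w) - 'D_u F (p + a *: u) - B * t| <= eps * t.
  move=> a0t.
  have := @MVT_affine_le _ (fun b => 'D_u F (p + a *: u + b *: w))
    (fun b => 'D_w ('D_u F) (p + a *: u + b *: w)) t B eps t0.
  rewrite /= scale0r addr0; apply=> b b0t; last exact: D2F_near.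
  exact/is_derive_along/smooth_derivable/smooth_derive.
rewrite expr2 !mulrA.
have := @MVT_affine_le _ (fun a => F (p + t *: w + a *: u) - F (p + a *: u))
  (fun a => 'D_u F (p + t *: w + a *: u) - 'D_u F (p + a *: u)) t (B * t) (eps * t) t0.
rewrite /= !scale0r !addr0 [p + t *: w + t *: u]addrAC.
have -> : forall x y z, x - y - (z - F p) - B * t * t = x - y - z + F p - B * t * t.
  by move=> x y z; ring.
apply=> a a0t.
  by apply: is_deriveB; apply/is_derive_along/smooth_derivable.
by rewrite [p + t *: w + a *: u]addrAC; apply: DuF_incr.
Qed.

End AlongLines.

Lemma ler_dist_halves {R : realFieldType} (a b D x e : R) : 0 < x ->
  `|D - a * x| <= e / 2 * x -> `|D - b * x| <= e / 2 * x -> `|a - b| <= e.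
Proof.
move=> x_gt0 Da Db; rewrite -(ler_pM2r x_gt0) -{1}(gtr0_norm x_gt0) -normrM.
have -> : (a - b) * x = (D - b * x) - (D - a * x) by ring.
apply: le_trans (ler_normB _ _) _.
by rewrite {1}[e]splitr mulrDl lerD.
Qed.

Section Schwarz.
Context {R : realType} {V : normedModType R}.
Implicit Types (F : V -> R) (u w p : V).

Lemma second_difference_near F u w p eps : smooth F -> 0 < eps ->
  exists2 t0 : R, 0 < t0 & forall t, 0 <= t <= t0 ->
  `|F (p + t *: u + t *: w) - F (p + t *: u) - F (p + t *: w) + F p
    - 'D_w ('D_u F) p * t ^+ 2| <= eps * t ^+ 2.
Proof.
move=> sF eps_gt0.
have /cvgrPdist_le /(_ eps eps_gt0) /nbhs_ballP [r r_gt0 D2F_near] :=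
  differentiable_continuous (smooth_Dseq [:: w; u] sF [::] p).
have N_gt0 : 0 < `|u| + `|w| + 1 by rewrite ltr_pwDr.
exists (r / (`|u| + `|w| + 1)) => [|t /andP [t0 t_le]]; first exact: divr_gt0.
apply: second_difference_le => // [a b /andP [a0 a_le] /andP [b0 b_le]].
rewrite distrC; apply: D2F_near; rewrite -ball_normE /ball_ /=.
rewrite -addrA opprD addrA subrr sub0r normrN.
apply: le_lt_trans (ler_normD _ _) _; rewrite !normrZ !ger0_norm //.
apply: (@le_lt_trans _ _ (r / (`|u| + `|w| + 1) * (`|u| + `|w|))).
  rewrite mulrDr; apply: lerD; apply: ler_wpM2r => //; exact: le_trans t_le.
by rewrite mulrAC ltr_pdivrMr // ltr_pM2l // ltrDl.
Qed.

(* Schwarz: the second difference in the directions u and w is symmetric in u and w. *)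
Lemma smooth_deriveC F u w : smooth F -> 'D_u ('D_w F) = 'D_w ('D_u F).
Proof.
move=> sF; apply/funext => p; apply/eqP; rewrite -subr_eq0 -normr_le0.
apply/ler_addgt0Pr => e e_gt0; rewrite add0r.
have e2_gt0 : 0 < e / 2 by rewrite divr_gt0.
have [t1 t1_gt0 near_uw] := second_difference_near u w p sF e2_gt0.
have [t2 t2_gt0 near_wu] := second_difference_near w u p sF e2_gt0.
pose t := Num.min t1 t2.
have t_gt0 : 0 < t by rewrite lt_min t1_gt0.
have /near_uw uw_le : 0 <= t <= t1 by rewrite ltW // ge_min lexx.
have /near_wu wu_le : 0 <= t <= t2 by rewrite ltW // ge_min lexx orbT.
rewrite [p + t *: w + t *: u]addrAC (addrAC (F (p + t *: u + t *: w))) in wu_le.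
exact: ler_dist_halves (exprn_gt0 2 t_gt0) wu_le uw_le.
Qed.

Lemma Dseq_deriveC l w F : smooth F -> Dseq l ('D_w F) = 'D_w (Dseq l F).
Proof.
by move=> sF; elim: l => //= u l ->; apply/smooth_deriveC/smooth_Dseq.
Qed.

End Schwarz.

Section SmoothRemainders.
Context {R : realType} (d : nat).
Local Notation V := (@ST R d).
Implicit Types (r : R -> V -> R) (n : nat).

Definition smoothO n r := (forall dt, 0 < dt -> smooth (r dt)) /\ LBMO n r.

Lemma smoothO_eq n r r' : (forall dt, 0 < dt -> r dt = r' dt) ->
  smoothO n r -> smoothO n r'.
Proof.
move=> rr' [r_smooth r_O]; split=> [dt dt_gt0|l]; first by rewrite -rr' //; apply: r_smooth.
have [C [delta [delta_gt0 r_le]]] := r_O l.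
by exists C, delta; split=> // dt dt_gt0 dt_lt p; rewrite -rr' //; apply: r_le.
Qed.

Lemma smoothO0 n : smoothO n (fun _ _ => 0).
Proof.
split=> [dt _|l]; first exact: smooth_cst.
exists 0, 1; split=> // dt _ _ p.
by rewrite Dseq_cst mul0r; case: l => [|? ?]; rewrite normr0.
Qed.

Lemma smoothOD n r1 r2 : smoothO n r1 -> smoothO n r2 ->
  smoothO n (fun dt p => r1 dt p + r2 dt p).
Proof.
move=> [r1_smooth r1_O] [r2_smooth r2_O].
split=> [dt dt_gt0|l]; first exact: smoothD (r1_smooth _ _) (r2_smooth _ _).
have [C1 [delta1 [delta1_gt0 r1_le]]] := r1_O l.
have [C2 [delta2 [delta2_gt0 r2_le]]] := r2_O l.
exists (C1 + C2), (Num.min delta1 delta2); split; first by rewrite lt_min delta1_gt0.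
move=> dt dt_gt0; rewrite lt_min => /andP [dt_lt1 dt_lt2] p.
have [r1s r2s] := (r1_smooth _ dt_gt0, r2_smooth _ dt_gt0).
rewrite DseqD // mulrDl.
by apply: le_trans (ler_normD _ _) _; apply: lerD; [apply: r1_le|apply: r2_le].
Qed.

Lemma smoothOZ n c r : smoothO n r -> smoothO n (fun dt p => c * r dt p).
Proof.
move=> [r_smooth r_O]; split=> [dt dt_gt0|l]; first exact/smoothZ/r_smooth.
have [C [delta [delta_gt0 r_le]]] := r_O l.
exists (`|c| * C), delta; split=> // dt dt_gt0 dt_lt p.
have rs := r_smooth _ dt_gt0.
by rewrite DseqZ // normrM -mulrA; apply: ler_wpM2l; last exact: r_le.
Qed.

Lemma smoothO_sum n (I : Type) (s : seq I) (P : pred I) (rs : I -> R -> V -> R) :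
  (forall i, P i -> smoothO n (rs i)) ->
  smoothO n (fun dt p => \sum_(i <- s | P i) rs i dt p).
Proof.
move=> rs_O; apply: (@smoothO_eq n (\sum_(i <- s | P i) rs i)).
  by move=> dt _; rewrite !fct_sumE.
by elim/big_ind: _ => //; [exact: smoothO0|exact: smoothOD].
Qed.

Lemma smoothO_dtM n r : smoothO n r -> smoothO n.+1 (fun dt p => dt * r dt p).
Proof.
move=> [r_smooth r_O]; split=> [dt dt_gt0|l]; first exact/smoothZ/r_smooth.
have [C [delta [delta_gt0 r_le]]] := r_O l.
exists C, delta; split=> // dt dt_gt0 dt_lt p.
have rs := r_smooth _ dt_gt0.
rewrite DseqZ // normrM (gtr0_norm dt_gt0) exprS mulrCA.
by apply: ler_wpM2l; [exact: ltW|exact: r_le].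
Qed.

Lemma smoothO_derive n u r : smoothO n r -> smoothO n (fun dt => 'D_u (r dt)).
Proof.
move=> [r_smooth r_O]; split=> [dt dt_gt0|l]; first exact/smooth_derive/r_smooth.
have [C [delta [delta_gt0 r_le]]] := r_O (rcons l u).
by exists C, delta; split=> // dt dt_gt0 dt_lt p; rewrite -Dseq_rcons r_le.
Qed.

Lemma smoothO_increment w r : smoothO 0 r ->
  smoothO 1 (fun dt p => r dt (p + dt *: w) - r dt p).
Proof.
move=> [r_smooth r_O].
split=> [dt /r_smooth rs|l]; first by apply: smoothB => //; apply: smooth_translate.
have [C [delta [delta_gt0 r_le]]] := r_O (w :: l).
exists C, delta; split=> // dt dt_gt0 dt_lt p.
have rs := r_smooth _ dt_gt0.
rewrite DseqB //; last exact: smooth_translate.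
rewrite Dseq_translate expr1.
apply: increment_le; [exact: smooth_Dseq|exact: ltW|] => q.
by rewrite -[C]mulr1 -(expr0 dt); apply: r_le.
Qed.

Lemma smoothO_taylor2 w r : smoothO 0 r ->
  smoothO 2 (fun dt p => dt * 'D_w (r dt) p - (r dt (p + dt *: w) - r dt p)).
Proof.
move=> [r_smooth r_O].
have incr_smooth dt : 0 < dt -> smooth (fun p => r dt (p + dt *: w) - r dt p).
  by move=> /r_smooth rs; apply: smoothB => //; apply: smooth_translate.
split=> [dt dt_gt0|l].
  by apply: smoothB; [apply/smoothZ/smooth_derive/r_smooth|apply: incr_smooth].
have [C [delta [delta_gt0 r_le]]] := r_O (w :: w :: l).
exists C, delta; split=> // dt dt_gt0 dt_lt p.
have rs := r_smooth _ dt_gt0.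
rewrite DseqB; [|exact/smoothZ/smooth_derive|exact: incr_smooth].
rewrite DseqB //; last exact: smooth_translate.
rewrite DseqZ; last exact: smooth_derive.
rewrite Dseq_translate Dseq_deriveC // distrC.
apply: taylor2_le; [exact: smooth_Dseq|exact: ltW|] => q.
by rewrite -[C]mulr1 -(expr0 dt); apply: r_le.
Qed.

End SmoothRemainders.

Lemma sum_mulmx_inverse {R : pzRingType} n (A B : 'M[R]_n) (x : 'I_n -> R) k :
  A *m B = 1%:M -> \sum_(j < n) A k j * \sum_(i < n) B j i * x i = x k.
Proof.
move=> AB; transitivity (\sum_(i < n) (A *m B) k i * x i).
  under eq_bigr do rewrite mulr_sumr.
  rewrite exchange_big /=; apply: eq_bigr => i _; rewrite mxE mulr_suml.
  by apply: eq_bigr => j _; rewrite mulrA.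
rewrite AB (bigD1 k) //= big1 ?addr0 => [|i /negPf ik]; first by rewrite !mxE eqxx mul1r.
by rewrite !mxE eq_sym ik mul0r.
Qed.

Lemma derive_spacetime {R : realType} d (g : @ST R d -> R) (v : 'rV[R]_d) p :
  differentiable g p ->
  'D_((v, 1) : ST d) g p = dT g p + \sum_(b < d) v 0 b * dX b g p.
Proof.
move=> dg; rewrite /dT /dX !deriveE //; under [X in _ = _ + X]eq_bigr do rewrite deriveE //.
pose S := \sum_(b < d) v 0 b *: ((delta_mx 0 b : 'rV_d), 0 : R).
have -> : ((v, 1) : ST d) = (0, 1) + S.
  rewrite [S]surjective_pairing /S (big_morph fst (id1 := 0) (op1 := +%R)) //.
  rewrite (big_morph snd (id1 := 0) (op1 := +%R)) //= -row_sum_delta big1 => [|b _].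
    by rewrite -[RHS]/(0 + v, 1 + 0) add0r addr0.
  exact: mulr0.
by rewrite linearD linear_sum; congr (_ + _); apply: eq_bigr => b _; rewrite linearZ.
Qed.

Section Scheme.
Context {R : realType} (d J : nat) (lam : R) (e : 'I_J.+1 -> 'rV[R]_d)
  (M : 'M[R]_J.+1) (G : 'rV[R]_d.+1 -> 'I_J.+1 -> R) (s : 'I_J.+1 -> R).
Local Notation V := (@ST R d).
Hypothesis hMinv : M \in unitmx.
Hypothesis hM0 : forall j, M ord0 j = 1.
Hypothesis hMa : forall (a : 'I_d) j, M (inord a.+1) j = (vel lam e j) 0 a.
Hypothesis hG0 : forall w, \sum_(j < J.+1) G w j = w 0 0.
Hypothesis hGa : forall w (a : 'I_d),
  \sum_(j < J.+1) (vel lam e j) 0 a * G w j = w 0 (inord a.+1).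
Hypothesis s_neq0 : forall k : 'I_J.+1, (d < k)%N -> s k != 0.

Definition wvel j : V := (vel lam e j, 1).

Section FixedStep.
Variables (dt : R) (f : 'I_J.+1 -> V -> R).
Implicit Types (j k : 'I_J.+1) (p : V).

Lemma f_mom j p : f j p = \sum_k invmx M j k * mom M f k p.
Proof. by rewrite sum_mulmx_inverse ?mulVmx. Qed.

Lemma feq_meq j p : feq M G f j p = \sum_k invmx M j k * meq M G f k p.
Proof. by rewrite sum_mulmx_inverse ?mulVmx. Qed.

Lemma meq_conserved k p : (k <= d)%N -> meq M G f k p = mom M f k p.
Proof.
rewrite /meq /feq; case: k => -[|a] k_lt k_le.
  have -> : Ordinal k_lt = ord0 by apply: val_inj.
  under eq_bigr do rewrite hM0 mul1r.
  by rewrite hG0 mxE; congr mom; apply/val_inj/inordK.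
pose a' : 'I_d := Ordinal k_le.
have -> : Ordinal k_lt = inord a'.+1 by apply/val_inj; rewrite /= inordK.
under eq_bigr do rewrite hMa.
by rewrite hGa mxE; congr mom; apply/val_inj; rewrite /= !inordK.
Qed.

(* For k <= d both sides are mom, whatever the (unconstrained) value of s k. *)
Lemma meq_relaxation k p :
  meq M G f k p = mom M f k p + (mstar M G s f k p - mom M f k p) / s k.
Proof.
rewrite /mstar; case: leqP => [k_le|k_gt]; first by rewrite subrr mul0r addr0 meq_conserved.
by field; apply: s_neq0.
Qed.

Hypothesis hsch : scheme lam e M G s dt f.

Lemma fstar_scheme j p : fstar M G s f j p = f j (p + dt *: wvel j).
Proof.
case: p => x t; rewrite -[x in LHS](addrK (dt *: vel lam e j)) -hsch.
by rewrite /wvel -[_ *: (_, _)]/(dt *: vel lam e j, dt * 1) mulr1.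
Qed.

Lemma mstar_sub_mom k p : mstar M G s f k p - mom M f k p =
  \sum_l M k l * (f l (p + dt *: wvel l) - f l p).
Proof.
rewrite -[mstar _ _ _ _ k p](@sum_mulmx_inverse _ _ M (invmx M) (mstar M G s f ^~ p))
  ?mulmxV //.
by rewrite -sumrB; apply: eq_bigr => l _; rewrite -fstar_scheme mulrBr.
Qed.

Lemma feq_scheme j p : feq M G f j p = f j p +
  \sum_k invmx M j k / s k * \sum_l M k l * (f l (p + dt *: wvel l) - f l p).
Proof.
rewrite feq_meq (f_mom j p) -big_split; apply: eq_bigr => k _ /=.
by rewrite meq_relaxation mstar_sub_mom mulrDr mulrA mulrAC.
Qed.

End FixedStep.

Section Expansion.
Variable f : R -> 'I_J.+1 -> V -> R.
Hypothesis hscheme : forall dt, 0 < dt -> scheme lam e M G s dt (f dt).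
Hypothesis f_smooth : forall dt j, 0 < dt -> smooth (f dt j).
Hypothesis f_bounded : forall j, LBMO 0 (fun dt => f dt j).
Implicit Types (j k : 'I_J.+1) (p : V).

Definition feq_corr j dt p :=
  \sum_k invmx M j k / s k * \sum_l M k l * (f dt l (p + dt *: wvel l) - f dt l p).

Lemma f_smoothO j : smoothO 0 (fun dt => f dt j).
Proof. by split=> [dt|]; [exact: f_smooth|exact: f_bounded]. Qed.

Lemma feq_corr_smoothO j : smoothO 1 (feq_corr j).
Proof.
apply: smoothO_sum => k _; apply: smoothOZ; apply: smoothO_sum => l _; apply: smoothOZ.
exact: smoothO_increment (f_smoothO l).
Qed.

Lemma feq_split dt j : 0 < dt -> feq M G (f dt) j = fun p => f dt j p + feq_corr j dt p.
Proof. by move=> /hscheme f_sch; apply/funext => p; rewrite (feq_scheme f_sch). Qed.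

Lemma theta_split dt k : 0 < dt -> theta lam e M G (f dt) k = fun p =>
  \sum_j M k j * 'D_(wvel j) (f dt j) p + \sum_j M k j * 'D_(wvel j) (feq_corr j dt) p.
Proof.
move=> dt_gt0; apply/funext => p; rewrite /theta -big_split; apply: eq_bigr => j _ /=.
have [fs cs] := (f_smooth j dt_gt0, (feq_corr_smoothO j).1 dt dt_gt0).
rewrite -mulrDr -derive_spacetime feq_split //; last exact: (smoothD fs cs [::]).
by congr (_ * _); apply: (congr1 (@^~ p) (DseqD [:: wvel j] fs cs)).
Qed.

Lemma theta_smooth dt k : 0 < dt -> smooth (theta lam e M G (f dt) k).
Proof.
move=> dt_gt0; rewrite theta_split //.
apply: smoothD; apply: smooth_sum => j; apply/smoothZ/smooth_derive.
  exact: f_smooth.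
exact: (feq_corr_smoothO j).1.
Qed.

Lemma mom_meq_expansion k : (d < k)%N -> smoothO 2 (fun dt p =>
  mom M (f dt) k p - meq M G (f dt) k p + dt / s k * theta lam e M G (f dt) k p).
Proof.
move=> k_gt.
have taylorO : smoothO 2 (fun dt p => \sum_j M k j *
    (dt * 'D_(wvel j) (f dt j) p - (f dt j (p + dt *: wvel j) - f dt j p))).
  by apply: smoothO_sum => j _; apply/smoothOZ/smoothO_taylor2/f_smoothO.
have corrO : smoothO 2 (fun dt p => dt * \sum_j M k j * 'D_(wvel j) (feq_corr j dt) p).
  by apply/smoothO_dtM/smoothO_sum => j _; apply/smoothOZ/smoothO_derive/feq_corr_smoothO.
apply: smoothO_eq (smoothOZ (s k)^-1 (smoothOD taylorO corrO)) => dt dt_gt0.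
apply/funext => p; rewrite theta_split // meq_relaxation (mstar_sub_mom (hscheme dt_gt0)).
rewrite [X in _ * (X + _)](_ : _ = dt * \sum_j M k j * 'D_(wvel j) (f dt j) p -
    \sum_j M k j * (f dt j (p + dt *: wvel j) - f dt j p)).
  by move: (\sum_j _) (\sum_j _) (\sum_j _) => A B C; ring.
by rewrite mulr_sumr -sumrB; apply: eq_bigr => j _; rewrite mulrBr mulrCA.
Qed.

Lemma mstar_meq_expansion k : (d < k)%N -> smoothO 2 (fun dt p =>
  mstar M G s (f dt) k p - meq M G (f dt) k p
  + (1 / s k - 1) * dt * theta lam e M G (f dt) k p).
Proof.
move=> k_gt; apply: smoothO_eq (smoothOZ (1 - s k) (mom_meq_expansion k_gt)) => dt _.
apply/funext => p; rewrite /mstar leqNgt k_gt /=.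
by field; apply: s_neq0.
Qed.

Lemma fstar_feq_expansion j : smoothO 2 (fun dt p =>
  fstar M G s (f dt) j p - feq M G (f dt) j p
  + dt * \sum_(k < J.+1 | (d < k)%N)
           (1 / s k - 1) * invmx M j k * theta lam e M G (f dt) k p).
Proof.
have : smoothO 2 (fun dt p => \sum_(k < J.+1 | (d < k)%N) invmx M j k *
    (mstar M G s (f dt) k p - meq M G (f dt) k p
     + (1 / s k - 1) * dt * theta lam e M G (f dt) k p)).
  by apply: smoothO_sum => k k_gt; apply/smoothOZ/mstar_meq_expansion.
apply: smoothO_eq => dt _; apply/funext => p.
rewrite /fstar feq_meq -sumrB mulr_sumr !(big_mkcond (fun k => (d < k)%N)) -big_split /=.
apply: eq_bigr => k _; case: ltnP => [_|k_le]; first ring.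
by rewrite /mstar k_le meq_conserved // subrr addr0.
Qed.

Lemma dX_fstar_feq_expansion j b : smoothO 2 (fun dt p =>
  dX b (fstar M G s (f dt) j) p - dX b (feq M G (f dt) j) p
  + dt * \sum_(k < J.+1 | (d < k)%N)
           (1 / s k - 1) * invmx M j k * dX b (theta lam e M G (f dt) k) p).
Proof.
apply: smoothO_eq (smoothO_derive (delta_mx 0 b, 0) (fstar_feq_expansion j)).
move=> dt dt_gt0; apply/funext => p.
have fstar_smooth : smooth (fstar M G s (f dt) j).
  have -> : fstar M G s (f dt) j = fun p => f dt j (p + dt *: wvel j).
    by apply/funext => q; rewrite (fstar_scheme (hscheme dt_gt0)).
  exact/smooth_translate/f_smooth.
have feq_smooth : smooth (feq M G (f dt) j).
  by rewrite feq_split //; apply: smoothD; [exact: f_smooth|exact: (feq_corr_smoothO j).1].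
have theta_terms_smooth k : smooth (fun p =>
    (1 / s k - 1) * invmx M j k * theta lam e M G (f dt) k p).
  exact/smoothZ/theta_smooth.
rewrite -[LHS]/(Dseq [:: _] _ p) DseqD; last 2 first.
- exact: smoothB.
- exact/smoothZ/smooth_sum.
rewrite DseqB // DseqZ; last exact: smooth_sum.
rewrite (Dseq_sum _ (fun k => (d < k)%N)) //; congr (_ + _ * _); apply: eq_bigr => k _.
exact: (congr1 (@^~ p) (DseqZ [:: _] _ (theta_smooth k dt_gt0))).
Qed.

End Expansion.

End Scheme.

Theorem proposition5 (R : realType) (d J : nat) (hd : (1 <= d)%N) (hJ : (d <= J)%N)
  (lam : R) (hlam : 0 < lam) (e : 'I_J.+1 -> 'rV[R]_d) (M : 'M[R]_J.+1)
  (G : 'rV[R]_d.+1 -> 'I_J.+1 -> R) (s : 'I_J.+1 -> R)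
  (hMinv : M \in unitmx)
  (hM0 : forall j : 'I_J.+1, M ord0 j = 1)
  (hMa : forall (a : 'I_d) (j : 'I_J.+1), M (inord a.+1) j = (vel lam e j) 0 a)
  (hGsmooth : forall j : 'I_J.+1, smooth (fun w => G w j))
  (hG0 : forall w : 'rV[R]_d.+1, \sum_(j < J.+1) G w j = w 0 0)
  (hGa : forall (w : 'rV[R]_d.+1) (a : 'I_d),
      \sum_(j < J.+1) (vel lam e j) 0 a * G w j = w 0 (inord a.+1))
  (hs : forall k : 'I_J.+1, (d < k)%N -> 0 < s k <= 2)
  (f : R -> 'I_J.+1 -> ST d -> R)
  (hscheme : forall dt : R, 0 < dt -> scheme lam e M G s dt (f dt))
  (hfsmooth : forall (dt : R) (j : 'I_J.+1), 0 < dt -> smooth (f dt j))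
  (hfbound : forall j : 'I_J.+1, LBMO 0 (fun dt => f dt j)) :
  (forall k : 'I_J.+1, (d < k)%N ->
     LBMO 2 (fun dt p => mom M (f dt) k p - meq M G (f dt) k p
                         + dt / s k * theta lam e M G (f dt) k p))
  /\ (forall k : 'I_J.+1, (d < k)%N ->
     LBMO 2 (fun dt p => mstar M G s (f dt) k p - meq M G (f dt) k p
                         + (1 / s k - 1) * dt * theta lam e M G (f dt) k p))
  /\ (forall (j : 'I_J.+1) (b : 'I_d),
     LBMO 2 (fun dt p => dX b (fstar M G s (f dt) j) p - dX b (feq M G (f dt) j) p
        + dt * \sum_(k < J.+1 | (d < k)%N)
                 (1 / s k - 1) * invmx M j k * dX b (theta lam e M G (f dt) k) p)).
Proof.
have s_neq0 (k : 'I_J.+1) : (d < k)%N -> s k != 0.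
  by move=> /hs /andP [s_gt0 _]; apply: lt0r_neq0.
split; [|split] => [k k_gt|k k_gt|j b].
- by case: (mom_meq_expansion hMinv hM0 hMa hG0 hGa s_neq0
    hscheme hfsmooth hfbound k_gt).
- by case: (mstar_meq_expansion hMinv hM0 hMa hG0 hGa s_neq0
    hscheme hfsmooth hfbound k_gt).
- by case: (dX_fstar_feq_expansion hMinv hM0 hMa hG0 hGa s_neq0
    hscheme hfsmooth hfbound j b).
Qed.
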